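(* Let $f\in\mathcal{K}$ have radius of convergence $R>0$, with Khinchin family $(X_t)$ and fulcrum $F$, and let $Z$ be a standard normal random variable. Fix an integer $n\ge3$. Then $$\lim_{t\uparrow R}\mathbf{E}(\breve{X}_t^j)=\mathbf{E}(Z^j)\quad\text{for every }3\le j\le n$$ if and only if $$\lim_{s\uparrow\ln R}\frac{F^{(j)}(s)}{F''(s)^{j/2}}=0\quad\text{for every }3\le j\le n.$$
   Context: The class $\mathcal{K}$ consists of non-constant power series $f(z)=\sum_{n\ge0}a_nz^n$ with radius of convergence $R\in(0,+\infty]$, with $a_n\ge 0$ for all $n$ and $a_0>0$. For $t\in(0,R)$, $X_t$ is the random variable with $\mathbf{P}(X_t=n)=a_nt^n/f(t)$, $n\ge0$. Write $m_f(t)=\mathbf{E}(X_t)=tf'(t)/f(t)$, $\sigma_f^2(t)=\mathbf{V}(X_t)=t\,m_f'(t)>0$, and $\breve{X}_t=(X_t-m_f(t))/\sigma_f(t)$. The fulcrum of $f$ is $F(s)=\ln f(e^s)$ for real $s<\ln R$ (with $\ln R=+\infty$ if $R=+\infty$); $F''(s)=\sigma_f^2(e^s)$. Limits $t\uparrow R$ mean $t\to+\infty$ when $R=+\infty$. *)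

From Stdlib Require Import Reals.
From Coquelicot Require Import Coquelicot.
Open Scope R_scope.

(* A power series f(z) = sum a_n z^n is represented by its coefficient
   sequence a : nat -> R; f t = PSeries a t, radius R = CV_radius a. *)

Definition khin_prob (a : nat -> R) (t : R) (k : nat) : R :=
  a k * t ^ k / PSeries a t.

Definition khin_mean (a : nat -> R) (t : R) : R :=
  Series (fun k => INR k * khin_prob a t k).

Definition khin_var (a : nat -> R) (t : R) : R :=
  Series (fun k => (INR k - khin_mean a t) ^ 2 * khin_prob a t k).

Definition khin_sigma (a : nat -> R) (t : R) : R := sqrt (khin_var a t).

Definition khin_norm_moment (a : nat -> R) (t : R) (j : nat) : R :=
  Series (fun k => ((INR k - khin_mean a t) / khin_sigma a t) ^ j * khin_prob a t k).

Definition fulcrum (a : nat -> R) (s : R) : R := ln (PSeries a (exp s)).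

Definition normal_moment (j : nat) : R :=
  RInt_gen (fun x => x ^ j * exp (- x ^ 2 / 2) / sqrt (2 * PI))
    (Rbar_locally m_infty) (Rbar_locally p_infty).

Definition left_to (L : Rbar) : (R -> Prop) -> Prop :=
  match L with
  | Finite r => at_left r
  | p_infty => Rbar_locally p_infty
  | m_infty => Rbar_locally m_infty
  end.

Definition Rbar_ln (L : Rbar) : Rbar :=
  match L with
  | Finite r => Finite (ln r)
  | p_infty => p_infty
  | m_infty => m_infty
  end.

(* The moments of [X_t - c], [t = e^s], satisfy [M_j' = M_(j+1) - M_1 M_j] in [s], and
   [F' = M_1 + c]. Differentiating the moment-cumulant relation
   [M_(p+1) = sum_i C(p,i) K_(i+1) M_(p-i)] shows inductively that the cumulants of
   [X_t - c] are [K_1 = M_1] and [K_j = F^(j)(s)] for [j >= 2]. Taking [c = m_f(t)] and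
   dividing by [sigma_f(t)^j], the normalized moments of [X_t] and the ratios
   [F^(j) / F''^(j/2)] satisfy the same relation, with [K_1 = 0] and [K_2 = 1]. The relation is
   triangular, so moments of orders [<= n] converge to those of a law iff cumulants of orders
   [<= n] converge to its cumulants; the standard normal law has cumulants [0] except
   [K_2 = 1]. Its moments are computed by integration by parts, once [int phi = 1] is
   obtained from Owen's function [T(x, 1)]. *)

From Stdlib Require Import Reals Lra Lia Factorial.
From Coquelicot Require Import Coquelicot.
Open Scope R_scope.

(* Some Coquelicot lemmas state equalities in a structure such as [R_AbsRing];
   [ring] only recognizes them at type [R]. *)
Ltac R_eq := match goal with |- ?a = ?b => change (@eq R a b) end.

Lemma sum_f_R0_single (f : nat -> R) (N i0 : nat) :
  (i0 <= N)%nat -> (forall i, (i <= N)%nat -> i <> i0 -> f i = 0) ->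
  sum_f_R0 f N = f i0.
Proof.
  induction N as [|N IH]; intros Hi0 Hf.
  - now replace i0 with 0%nat by lia.
  - rewrite tech5. destruct (Nat.eq_dec i0 (S N)) as [->|Hne].
    + rewrite sum_eq_R0; [ring|]. intros i Hi; apply Hf; lia.
    + rewrite IH, (Hf (S N)); [ring|lia|lia|lia|]. intros i Hi; apply Hf; lia.
Qed.

Lemma sum_pascal (h : nat -> R) (p : nat) :
  sum_f_R0 (fun i => Binomial.C p i * (h (S i) + h i)) p =
  sum_f_R0 (fun i => Binomial.C (S p) i * h i) (S p).
Proof.
  destruct p as [|q].
  - simpl. rewrite !C_n_0, C_n_n. ring.
  - set (g i := Binomial.C (S q) i * h (S i)).
    rewrite (sum_eq _ (fun i => g i + Binomial.C (S q) i * h i)) by (intros; unfold g; ring).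
    rewrite plus_sum, (decomp_sum _ (S (S q))) by lia. simpl pred.
    rewrite (tech5 (fun i => Binomial.C (S (S q)) (S i) * h (S i))).
    rewrite (sum_eq (fun i => Binomial.C (S (S q)) (S i) * h (S i))
      (fun i => g i + Binomial.C (S q) (S i) * h (S i)))
      by (intros i Hi; unfold g; rewrite <- pascal by lia; ring).
    rewrite plus_sum, (tech5 g), (decomp_sum (fun i => Binomial.C (S q) i * h i) (S q)) by lia.
    simpl pred. unfold g. rewrite !C_n_n, !C_n_0. ring.
Qed.

Lemma is_derive_sum_f_R0 (f : nat -> R -> R) (df : nat -> R) (N : nat) (x : R) :
  (forall i, (i <= N)%nat -> is_derive (f i) x (df i)) ->
  is_derive (fun y => sum_f_R0 (fun i => f i y) N) x (sum_f_R0 df N).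
Proof.
  intros Hf. rewrite <- sum_n_Reals.
  apply is_derive_ext with (fun y => sum_n (fun i => f i y) N).
  - intros y; apply sum_n_Reals.
  - exact (is_derive_sum_n (K := R_AbsRing) (V := R_NormedModule) f N x df Hf).
Qed.

Lemma is_derive_Rmult (f g : R -> R) (x df dg : R) :
  is_derive f x df -> is_derive g x dg ->
  is_derive (fun t => f t * g t) x (df * g x + f x * dg).
Proof. intros Hf Hg. apply (is_derive_mult f g x df dg Hf Hg). intros; apply Rmult_comm. Qed.

Lemma Derive_minus_const (f : R -> R) (c x : R) :
  Derive (fun u => f u - c) x = Derive f x.
Proof. unfold Derive. f_equal. apply Lim_ext. intros h. f_equal. ring. Qed.

Section RealLimits.
Context {T : Type} {F : (T -> Prop) -> Prop} {FF : Filter F}.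

Lemma filterlim_Rplus (f g : T -> R) (l1 l2 : R) :
  filterlim f F (locally l1) -> filterlim g F (locally l2) ->
  filterlim (fun x => f x + g x) F (locally (l1 + l2)).
Proof.
  intros Hf Hg. apply (filterlim_comp_2 f g Rplus Hf Hg).
  exact (filterlim_plus (K := R_AbsRing) (V := R_NormedModule) l1 l2).
Qed.

Lemma filterlim_Rmult (f g : T -> R) (l1 l2 : R) :
  filterlim f F (locally l1) -> filterlim g F (locally l2) ->
  filterlim (fun x => f x * g x) F (locally (l1 * l2)).
Proof.
  intros Hf Hg. apply (filterlim_comp_2 f g Rmult Hf Hg).
  exact (filterlim_mult (K := R_AbsRing) l1 l2).
Qed.

Lemma filterlim_Rminus (f g : T -> R) (l1 l2 : R) :
  filterlim f F (locally l1) -> filterlim g F (locally l2) ->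
  filterlim (fun x => f x - g x) F (locally (l1 - l2)).
Proof.
  intros Hf Hg. apply filterlim_Rplus; [exact Hf|].
  apply (filterlim_comp _ _ _ g Ropp F (locally l2) _ Hg).
  exact (filterlim_opp (K := R_AbsRing) (V := R_NormedModule) l2).
Qed.

Lemma filterlim_sum_f_R0 (f : nat -> T -> R) (l : nat -> R) (N : nat) :
  (forall i, (i <= N)%nat -> filterlim (f i) F (locally (l i))) ->
  filterlim (fun x => sum_f_R0 (fun i => f i x) N) F (locally (sum_f_R0 l N)).
Proof.
  induction N as [|N IH]; intros Hf; simpl.
  - now apply Hf.
  - apply filterlim_Rplus; [apply IH|]; intros; apply Hf; lia.
Qed.

End RealLimits.

(** * Moments and cumulants *)

(* [k (S i)] is the cumulant of order [i + 1]. *)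
Definition is_cumulants (m k : nat -> R) : Prop :=
  m O = 1 /\
  forall p, m (S p) = sum_f_R0 (fun i => Binomial.C p i * k (S i) * m (p - i)%nat) p.

Lemma is_cumulants_scale (m k : nat -> R) (sigma : R) :
  sigma <> 0 -> is_cumulants m k ->
  is_cumulants (fun j => m j / sigma ^ j) (fun j => k j / sigma ^ j).
Proof.
  intros Hs [Hm0 Hm]. split.
  - rewrite Hm0. simpl. field.
  - intros p. rewrite Hm. unfold Rdiv. rewrite Rmult_comm, scal_sum. apply sum_eq. intros i Hi.
    replace (S p) with (S i + (p - i))%nat at 1 by lia. rewrite pow_add.
    field. split; apply pow_nonzero; exact Hs.
Qed.

Lemma is_cumulants_ext (m m' k k' : nat -> R) :
  (forall j, m j = m' j) -> (forall j, k j = k' j) -> is_cumulants m k -> is_cumulants m' k'.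
Proof.
  intros Hm Hk [H0 H]. split; [now rewrite <- Hm|]. intros p.
  rewrite <- Hm, H. apply sum_eq. intros i _. now rewrite Hk, Hm.
Qed.

(* [M j s] stands for the [j]-th moment about a fixed point of an exponentially tilted family
   [P_s(dx) ~ e^(s x) P(dx)]: then [M 1] is the derivative of the log-partition function. *)
Section MomentDerivatives.

Variable D : R -> Prop.
Hypothesis D_open : open D.
Variable M : nat -> R -> R.
Hypothesis M_0 : forall s, D s -> M O s = 1.
Hypothesis is_derive_M :
  forall j s, D s -> is_derive (M j) s (M (S j) s - M 1%nat s * M j s).

Let cumulant_rel (p : nat) (s : R) : Prop :=
  M (S p) s =
  sum_f_R0 (fun i => Binomial.C p i * Derive_n (M 1%nat) i s * M (p - i)%nat s) p.

(* Differentiate the relation at [p] using [M_j' = M_(j+1) - M_1 M_j]; Pascal's rule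
   reassembles the result into the relation at [p + 1]. *)
Lemma cumulant_rel_succ p :
  (forall s, D s -> cumulant_rel p s) ->
  (forall i s, (i <= p)%nat -> D s -> ex_derive (Derive_n (M 1%nat) i) s) ->
  forall s, D s -> cumulant_rel (S p) s.
Proof.
  intros Hrec Hex s Hs. unfold cumulant_rel.
  assert (Hsum : is_derive (M (S p)) s (sum_f_R0 (fun i =>
      (0 * Derive_n (M 1%nat) i s + Binomial.C p i * Derive_n (M 1%nat) (S i) s)
        * M (p - i)%nat s
      + Binomial.C p i * Derive_n (M 1%nat) i s
        * (M (S (p - i)) s - M 1%nat s * M (p - i)%nat s)) p)).
  { apply is_derive_ext_loc with (fun u => sum_f_R0 (fun i =>
      Binomial.C p i * Derive_n (M 1%nat) i u * M (p - i)%nat u) p).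
    { apply (filter_imp D); [|exact (D_open s Hs)]. intros u Hu. symmetry. now apply Hrec. }
    apply is_derive_sum_f_R0. intros i Hi.
    apply (is_derive_Rmult (fun u => Binomial.C p i * Derive_n (M 1%nat) i u));
      [apply (is_derive_Rmult (fun _ => Binomial.C p i))|now apply is_derive_M].
    - apply (is_derive_const (K := R_AbsRing) (V := R_NormedModule)).
    - apply Derive_correct, Hex; [lia|exact Hs]. }
  pose proof (is_derive_unique _ _ _ (is_derive_M (S p) s Hs)) as E.
  rewrite (is_derive_unique _ _ _ Hsum) in E.
  set (h i := Derive_n (M 1%nat) i s * M (S p - i)%nat s).
  rewrite (sum_eq _ (fun i => Binomial.C p i * (h (S i) + h i)
      - (Binomial.C p i * Derive_n (M 1%nat) i s * M (p - i)%nat s) * M 1%nat s)) in E.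
  2:{ intros i Hi. unfold h. replace (S p - S i)%nat with (p - i)%nat by lia.
      replace (S p - i)%nat with (S (p - i)) by lia. ring. }
  rewrite minus_sum, <- scal_sum, <- (Hrec s Hs), sum_pascal in E.
  rewrite (sum_eq _ (fun i => Binomial.C (S p) i * h i)) by (intros; unfold h; ring).
  lra.
Qed.

Lemma ex_derive_cumulant p :
  (forall s, D s -> cumulant_rel p s) ->
  (forall i s, (i < p)%nat -> D s -> ex_derive (Derive_n (M 1%nat) i) s) ->
  forall s, D s -> ex_derive (Derive_n (M 1%nat) p) s.
Proof.
  intros Hrec Hex s Hs. destruct p as [|p].
  - eexists. now apply is_derive_M.
  - assert (Htop : forall u, D u -> Derive_n (M 1%nat) (S p) u = M (S (S p)) u
        - sum_f_R0 (fun i => Binomial.C (S p) i * Derive_n (M 1%nat) i u * M (S p - i)%nat u) p).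
    { intros u Hu. rewrite (Hrec u Hu), tech5, C_n_n, Nat.sub_diag, M_0 by exact Hu. ring. }
    eexists. apply is_derive_ext_loc with (fun u => M (S (S p)) u - sum_f_R0 (fun i =>
        Binomial.C (S p) i * Derive_n (M 1%nat) i u * M (S p - i)%nat u) p).
    { apply (filter_imp D); [|exact (D_open s Hs)]. intros u Hu. symmetry. exact (Htop u Hu). }
    apply (is_derive_minus (K := R_AbsRing) (V := R_NormedModule));
      [now apply is_derive_M|].
    apply is_derive_sum_f_R0. intros i Hi.
    apply (is_derive_Rmult (fun u => Binomial.C (S p) i * Derive_n (M 1%nat) i u));
      [apply (is_derive_Rmult (fun _ => Binomial.C (S p) i))|now apply is_derive_M].
    + apply (is_derive_const (K := R_AbsRing) (V := R_NormedModule)).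
    + apply Derive_correct, Hex; [lia|exact Hs].
Qed.

Lemma is_cumulants_Derive_n s :
  D s -> is_cumulants (fun j => M j s) (fun j => Derive_n (M 1%nat) (pred j) s).
Proof.
  intros Hs. split; [now apply M_0|].
  assert (H : forall p, (forall s, D s -> cumulant_rel p s) /\
    (forall i s, (i <= p)%nat -> D s -> ex_derive (Derive_n (M 1%nat) i) s)).
  { induction p as [|p [Hrec Hex]].
    - assert (Hrec0 : forall s, D s -> cumulant_rel 0 s).
      { intros u Hu. unfold cumulant_rel. simpl. rewrite C_n_n, M_0 by exact Hu. ring. }
      split; [exact Hrec0|]. intros i u Hi Hu. replace i with 0%nat by lia.
      apply (ex_derive_cumulant 0); [exact Hrec0|lia|exact Hu].
    - assert (HrecS := cumulant_rel_succ p Hrec Hex).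
      split; [exact HrecS|]. intros i u Hi Hu.
      destruct (Nat.eq_dec i (S p)) as [->|Hne]; [|apply Hex; [lia|exact Hu]].
      apply ex_derive_cumulant; [exact HrecS| |exact Hu].
      intros i' u' Hi'. apply Hex. lia. }
  intros p. exact (proj1 (H p) s Hs).
Qed.

End MomentDerivatives.

Lemma C_Sn_1 (n : nat) : Binomial.C (S n) 1 = INR (S n).
Proof.
  unfold Binomial.C. replace (S n - 1)%nat with n by lia.
  rewrite fact_simpl, mult_INR. simpl (Factorial.fact 1). rewrite Rmult_1_l.
  field. apply INR_fact_neq_0.
Qed.

Fixpoint gauss_moment (j : nat) : R :=
  match j with
  | O => 1
  | S O => 0
  | S (S i) => INR (S i) * gauss_moment i
  end.

Definition gauss_cumulant (j : nat) : R := if (j =? 2)%nat then 1 else 0.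

Lemma gauss_is_cumulants : is_cumulants gauss_moment gauss_cumulant.
Proof.
  split; [reflexivity|]. intros [|p].
  - unfold gauss_cumulant. simpl. ring.
  - rewrite (sum_f_R0_single _ _ 1).
    + unfold gauss_cumulant. simpl Nat.eqb. rewrite C_Sn_1.
      replace (S p - 1)%nat with p by lia. simpl. ring.
    + lia.
    + intros i _ Hi. unfold gauss_cumulant.
      destruct (Nat.eqb_spec (S i) 2); [lia|ring].
Qed.

Section CumulantLimits.

Context {T : Type} {F : (T -> Prop) -> Prop} {FF : Filter F}.
Variables mu kappa : nat -> T -> R.
Hypothesis mu_kappa : F (fun x => is_cumulants (fun j => mu j x) (fun j => kappa j x)).

(* The relation is triangular: [mu (S p) - kappa (S p)] only involves lower orders. *)
Lemma filterlim_moment_minus_cumulant (m k : nat -> R) (p : nat) :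
  is_cumulants m k ->
  (forall j, (j <= p)%nat -> filterlim (mu j) F (locally (m j))) ->
  (forall j, (1 <= j <= p)%nat -> filterlim (kappa j) F (locally (k j))) ->
  filterlim (fun x => mu (S p) x - kappa (S p) x) F (locally (m (S p) - k (S p))).
Proof.
  intros [Hm0 Hm] Hmu Hkappa. destruct p as [|p].
  - apply filterlim_ext_loc with (fun _ => 0).
    { generalize mu_kappa. apply filter_imp. intros x [Hx0 Hx].
      rewrite Hx. simpl. rewrite Hx0, C_n_0. ring. }
    rewrite Hm. simpl. rewrite Hm0, C_n_0.
    replace (1 * k 1%nat * 1 - k 1%nat) with 0 by ring. apply filterlim_const.
  - apply filterlim_ext_loc with (fun x => sum_f_R0 (fun i =>
        Binomial.C (S p) i * kappa (S i) x * mu (S p - i)%nat x) p).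
    { generalize mu_kappa. apply filter_imp. intros x [Hx0 Hx].
      rewrite Hx, tech5, C_n_n, Nat.sub_diag, Hx0. ring. }
    replace (m (S (S p)) - k (S (S p)))
      with (sum_f_R0 (fun i => Binomial.C (S p) i * k (S i) * m (S p - i)%nat) p)
      by (rewrite Hm, tech5, C_n_n, Nat.sub_diag, Hm0; ring).
    apply filterlim_sum_f_R0. intros i Hi.
    apply filterlim_Rmult; [apply filterlim_Rmult|].
    + apply filterlim_const.
    + apply Hkappa. lia.
    + apply Hmu. lia.
Qed.

Lemma filterlim_moments_iff_cumulants (m k : nat -> R) (n : nat) :
  is_cumulants m k ->
  (forall j, (j <= n)%nat -> filterlim (mu j) F (locally (m j))) <->
  (forall j, (1 <= j <= n)%nat -> filterlim (kappa j) F (locally (k j))).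
Proof.
  intros Hmk. induction n as [|n IH].
  - split; intros _ j Hj; [lia|]. replace j with 0%nat by lia.
    rewrite (proj1 Hmk). apply filterlim_ext_loc with (fun _ => 1); [|apply filterlim_const].
    generalize mu_kappa. apply filter_imp. intros x [Hx0 _]. now rewrite Hx0.
  - split; intros H j Hj.
    + assert (Hk : forall j, (1 <= j <= n)%nat -> filterlim (kappa j) F (locally (k j)))
        by (apply IH; intros; apply H; lia).
      destruct (Nat.eq_dec j (S n)) as [->|Hne]; [|apply Hk; lia].
      assert (Hd := filterlim_moment_minus_cumulant m k n Hmk
        (fun j Hj => H j ltac:(lia)) Hk).
      apply filterlim_ext with (fun x => mu (S n) x - (mu (S n) x - kappa (S n) x));
        [intros; ring|].
      replace (k (S n)) with (m (S n) - (m (S n) - k (S n))) by ring.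
      apply filterlim_Rminus; [apply H; lia|exact Hd].
    + assert (Hm : forall j, (j <= n)%nat -> filterlim (mu j) F (locally (m j)))
        by (apply IH; intros; apply H; lia).
      destruct (Nat.eq_dec j (S n)) as [->|Hne]; [|apply Hm; lia].
      assert (Hd := filterlim_moment_minus_cumulant m k n Hmk Hm
        (fun j Hj => H j ltac:(lia))).
      apply filterlim_ext with (fun x => (mu (S n) x - kappa (S n) x) + kappa (S n) x);
        [intros; ring|].
      replace (m (S n)) with ((m (S n) - k (S n)) + k (S n)) by ring.
      apply filterlim_Rplus; [exact Hd|apply H; lia].
Qed.

Lemma filterlim_gauss_moments_iff (n : nat) :
  F (fun x => kappa 1%nat x = 0 /\ kappa 2%nat x = 1) ->
  (forall j, (3 <= j <= n)%nat -> filterlim (mu j) F (locally (gauss_moment j))) <->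
  (forall j, (3 <= j <= n)%nat -> filterlim (kappa j) F (locally 0)).
Proof.
  intros Hk12.
  assert (Hlow : forall j, (1 <= j <= 2)%nat ->
    filterlim (kappa j) F (locally (gauss_cumulant j))).
  { intros j Hj. apply filterlim_ext_loc with (fun _ => gauss_cumulant j);
      [|apply filterlim_const].
    generalize Hk12. apply filter_imp. intros x [Hx1 Hx2].
    destruct (Nat.eq_dec j 1) as [->|Hne]; [now rewrite Hx1|].
    replace j with 2%nat by lia. now rewrite Hx2. }
  assert (Hhigh : forall j, (3 <= j)%nat -> gauss_cumulant j = 0).
  { intros j Hj. unfold gauss_cumulant. destruct (Nat.eqb_spec j 2); [lia|reflexivity]. }
  split; intros H j Hj.
  - rewrite <- (Hhigh j) by lia.
    apply (filterlim_moments_iff_cumulants _ _ n gauss_is_cumulants); [|lia].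
    intros i Hi. destruct (Nat.le_gt_cases i 2) as [Hi2|Hi2]; [|apply H; lia].
    apply (filterlim_moments_iff_cumulants _ _ 2 gauss_is_cumulants); [exact Hlow|lia].
  - apply (filterlim_moments_iff_cumulants _ _ n gauss_is_cumulants); [|lia].
    intros i Hi. destruct (Nat.le_gt_cases i 2) as [Hi2|Hi2]; [apply Hlow; lia|].
    rewrite Hhigh by lia. apply H. lia.
Qed.

End CumulantLimits.

(** * Moments of the standard normal law *)

Definition gauss_weight (j : nat) (x : R) : R :=
  x ^ j * exp (- x ^ 2 / 2) / sqrt (2 * PI).

Lemma sqrt_2PI_ge_1 : 1 <= sqrt (2 * PI).
Proof. rewrite <- sqrt_1. apply sqrt_le_1_alt. generalize PI2_1. lra. Qed.

Lemma gauss_weight_pos (x : R) : 0 < gauss_weight 0 x.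
Proof.
  unfold gauss_weight. apply Rdiv_lt_0_compat; [|generalize sqrt_2PI_ge_1; lra].
  rewrite pow_O, Rmult_1_l. apply exp_pos.
Qed.

Lemma is_derive_gauss_weight (j : nat) (x : R) :
  is_derive (gauss_weight j) x (INR j * gauss_weight (pred j) x - gauss_weight (S j) x).
Proof.
  unfold gauss_weight. auto_derive; [generalize sqrt_2PI_ge_1; lra|].
  replace (- (x * (x * 1)) * / 2) with (- x ^ 2 / 2) by field.
  simpl (x ^ S j). field. generalize sqrt_2PI_ge_1; lra.
Qed.

Lemma continuous_gauss_weight (j : nat) (x : R) : continuous (gauss_weight j) x.
Proof.
  apply (ex_derive_continuous (K := R_AbsRing) (V := R_NormedModule)).
  eexists. apply is_derive_gauss_weight.
Qed.

Lemma ex_RInt_gauss_weight (j : nat) (a b : R) : ex_RInt (gauss_weight j) a b.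
Proof.
  apply (ex_RInt_continuous (V := R_CompleteNormedModule)).
  intros; apply continuous_gauss_weight.
Qed.

Lemma pow_le_fact_exp (m : nat) (y : R) : 0 <= y -> y ^ m <= INR (fact m) * exp y.
Proof.
  intros Hy. assert (Hf : 0 < INR (fact m)) by apply INR_fact_lt_0.
  apply Rmult_le_reg_r with (/ INR (fact m)); [now apply Rinv_0_lt_compat|].
  replace (INR (fact m) * exp y * / INR (fact m)) with (exp y) by (field; lra).
  apply Rle_trans with (2 := exp_ge_taylor y m Hy).
  destruct m as [|m]; [simpl; lra|].
  rewrite tech5. assert (0 <= sum_f_R0 (fun k => y ^ k / INR (fact k)) m); [|lra].
  apply cond_pos_sum. intros k. apply Rdiv_le_0_compat; [now apply pow_le|apply INR_fact_lt_0].
Qed.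

Lemma gauss_weight_bound (j : nat) :
  exists C, forall x, 1 <= Rabs x -> Rabs (gauss_weight j x) <= C / Rabs x.
Proof.
  exists (2 ^ S j * INR (fact (S j))). intros x Hx.
  set (a := Rabs x) in *. set (e := exp (- x ^ 2 / 2)).
  assert (He : 0 < e) by apply exp_pos.
  assert (Hs := sqrt_2PI_ge_1).
  assert (Hpow : a ^ S j <= 2 ^ S j * (x ^ 2 / 2) ^ S j).
  { rewrite <- Rpow_mult_distr. replace (2 * (x ^ 2 / 2)) with (a ^ 2)
      by (unfold a; rewrite pow2_abs; field).
    rewrite <- pow_mult. apply Rle_pow; [exact Hx|lia]. }
  assert (Hexp : (x ^ 2 / 2) ^ S j * e <= INR (fact (S j))).
  { assert (E : exp (x ^ 2 / 2) * e = 1)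
      by (unfold e; rewrite <- exp_plus; replace (x ^ 2 / 2 + - x ^ 2 / 2) with 0 by field;
          apply exp_0).
    rewrite <- (Rmult_1_r (INR _)), <- E, <- Rmult_assoc.
    apply Rmult_le_compat_r; [lra|]. apply pow_le_fact_exp.
    apply Rdiv_le_0_compat; [apply pow2_ge_0|lra]. }
  unfold gauss_weight. fold e. unfold Rdiv.
  rewrite !Rabs_mult, Rabs_inv, <- RPow_abs, (Rabs_pos_eq e), (Rabs_pos_eq (sqrt _)) by lra.
  fold a. apply Rmult_le_reg_r with a; [lra|].
  rewrite (Rmult_assoc _ (/ a) a), Rinv_l, Rmult_1_r by lra.
  apply Rle_trans with (a ^ S j * e).
  - rewrite <- tech_pow_Rmult.
    assert (0 <= a ^ j * e * a)
      by (apply Rmult_le_pos; [apply Rmult_le_pos|]; try apply pow_le; lra).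
    assert (/ sqrt (2 * PI) <= 1) by (rewrite <- Rinv_1; apply Rinv_le_contravar; lra).
    nra.
  - apply Rle_trans with (2 ^ S j * (x ^ 2 / 2) ^ S j * e); [apply Rmult_le_compat_r; lra|].
    rewrite Rmult_assoc. apply Rmult_le_compat_l; [apply pow_le; lra|exact Hexp].
Qed.

Lemma is_lim_gauss_weight (j : nat) (L : Rbar) :
  is_lim Rabs L p_infty -> is_lim (gauss_weight j) L 0.
Proof.
  intros HL. destruct (gauss_weight_bound j) as [C HC].
  assert (Hbound : is_lim (fun x => C / Rabs x) L 0).
  { replace (Finite 0) with (Rbar_div C p_infty) by (simpl; f_equal; ring).
    apply is_lim_div; [apply is_lim_const|exact HL|discriminate|exact I]. }
  apply (filterlim_le_le (F := Rbar_locally' L) (fun x => - (C / Rabs x)) _ (fun x => C / Rabs x)).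
  - apply (filter_imp (fun x => 1 <= Rabs x)).
    + intros x Hx. apply Rabs_le_between, HC, Hx.
    + apply HL. exists 1. intros y Hy. lra.
  - replace (Finite 0) with (Rbar_opp 0) by (simpl; f_equal; ring).
    now apply is_lim_opp.
  - exact Hbound.
Qed.

Lemma filterlim_gauss_weight_p_infty (j : nat) :
  filterlim (gauss_weight j) (Rbar_locally p_infty) (locally 0).
Proof. exact (is_lim_gauss_weight j _ (is_lim_Rabs _ _ p_infty (is_lim_id _))). Qed.

Lemma filterlim_gauss_weight_m_infty (j : nat) :
  filterlim (gauss_weight j) (Rbar_locally m_infty) (locally 0).
Proof. exact (is_lim_gauss_weight j _ (is_lim_Rabs _ _ m_infty (is_lim_id _))). Qed.

Definition gauss_area (x : R) : R := RInt (gauss_weight 0) 0 x.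

Lemma is_derive_gauss_area (x : R) : is_derive gauss_area x (gauss_weight 0 x).
Proof.
  apply (is_derive_RInt _ _ 0).
  - apply filter_forall. intros b.
    apply (RInt_correct (V := R_CompleteNormedModule)), ex_RInt_gauss_weight.
  - apply continuous_gauss_weight.
Qed.

Definition owen_T (x : R) : R :=
  RInt (fun t => gauss_weight 0 x * gauss_weight 0 (x * t) / (1 + t ^ 2)) 0 1.

Lemma is_derive_owen_integrand (t x : R) :
  is_derive (fun u => gauss_weight 0 u * gauss_weight 0 (u * t) / (1 + t ^ 2)) x
    (- x * gauss_weight 0 x * gauss_weight 0 (x * t)).
Proof.
  assert (Ht : 0 < 1 + t ^ 2) by (generalize (pow2_ge_0 t); lra).
  unfold gauss_weight. auto_derive; [repeat split; generalize sqrt_2PI_ge_1; lra|].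
  replace (- (x * (x * 1)) * / 2) with (- x ^ 2 / 2) by field.
  replace (- (x * t * (x * t * 1)) * / 2) with (- (x * t) ^ 2 / 2) by field.
  field. split; [generalize sqrt_2PI_ge_1|]; nra.
Qed.

Lemma continuity_pt_gauss_weight (j : nat) (x : R) : continuity_pt (gauss_weight j) x.
Proof. apply continuity_pt_filterlim, continuous_gauss_weight. Qed.

Lemma continuous_owen_integrand (x t : R) :
  continuous (fun t => gauss_weight 0 x * gauss_weight 0 (x * t) / (1 + t ^ 2)) t.
Proof.
  apply (ex_derive_continuous (K := R_AbsRing) (V := R_NormedModule)).
  unfold gauss_weight. auto_derive. nra.
Qed.

Lemma ex_RInt_owen_integrand (x : R) :
  ex_RInt (fun t => gauss_weight 0 x * gauss_weight 0 (x * t) / (1 + t ^ 2)) 0 1.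
Proof.
  apply (ex_RInt_continuous (V := R_CompleteNormedModule)).
  intros; apply continuous_owen_integrand.
Qed.

Lemma continuity_2d_owen_derivative (x t : R) :
  continuity_2d_pt (fun u v => - u * gauss_weight 0 u * gauss_weight 0 (u * v)) x t.
Proof.
  apply continuity_2d_pt_mult; [apply continuity_2d_pt_mult|].
  - apply continuity_2d_pt_opp, continuity_2d_pt_id1.
  - apply (continuity_1d_2d_pt_comp (gauss_weight 0) (fun u _ => u)).
    + apply continuity_pt_gauss_weight.
    + apply continuity_2d_pt_id1.
  - apply (continuity_1d_2d_pt_comp (gauss_weight 0) (fun u v => u * v)).
    + apply continuity_pt_gauss_weight.
    + apply continuity_2d_pt_mult; [apply continuity_2d_pt_id1|apply continuity_2d_pt_id2].
Qed.

Lemma RInt_gauss_weight_scale (x : R) :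
  RInt (fun t => x * gauss_weight 0 (x * t)) 0 1 = gauss_area x.
Proof.
  unfold gauss_area.
  replace (RInt (gauss_weight 0) 0 x)
    with (RInt (gauss_weight 0) (x * 0 + 0) (x * 1 + 0)) by (f_equal; ring).
  rewrite <- (RInt_comp_lin (V := R_CompleteNormedModule)) by apply ex_RInt_gauss_weight.
  apply (RInt_ext (V := R_CompleteNormedModule)). intros t _. now rewrite Rplus_0_r.
Qed.

Lemma is_derive_owen_T (x : R) : is_derive owen_T x (- gauss_weight 0 x * gauss_area x).
Proof.
  set (f u t := gauss_weight 0 u * gauss_weight 0 (u * t) / (1 + t ^ 2)).
  assert (Hf : forall u t, Derive (fun z => f z t) u
                           = - u * gauss_weight 0 u * gauss_weight 0 (u * t))
    by (intros; apply is_derive_unique, is_derive_owen_integrand).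
  replace (- gauss_weight 0 x * gauss_area x)
    with (RInt (fun t => Derive (fun u => f u t) x) 0 1).
  - apply (is_derive_RInt_param f 0 1 x).
    + apply filter_forall. intros u t _. eexists. apply is_derive_owen_integrand.
    + intros t _. apply (continuity_2d_pt_ext _ _ _ _ (fun u v => eq_sym (Hf u v))).
      apply continuity_2d_owen_derivative.
    + apply filter_forall. apply ex_RInt_owen_integrand.
  - rewrite <- RInt_gauss_weight_scale, <- (RInt_scal (V := R_CompleteNormedModule)).
    + apply (RInt_ext (V := R_CompleteNormedModule)). intros t _.
      rewrite Hf. unfold scal; simpl; unfold mult; simpl. ring.
    + apply (ex_RInt_continuous (V := R_CompleteNormedModule)). intros t _.
      apply (ex_derive_continuous (K := R_AbsRing) (V := R_NormedModule)).
      unfold gauss_weight. auto_derive. generalize sqrt_2PI_ge_1; lra.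
Qed.

Lemma gauss_weight_0_le_1 (y : R) : gauss_weight 0 y <= 1.
Proof.
  unfold gauss_weight. rewrite pow_O, Rmult_1_l.
  assert (Hs := sqrt_2PI_ge_1).
  assert (He : exp (- y ^ 2 / 2) <= 1).
  { replace (- y ^ 2 / 2) with (- (y ^ 2 / 2)) by field. rewrite exp_Ropp.
    rewrite <- Rinv_1. apply Rinv_le_contravar; [lra|].
    generalize (exp_ineq1_le (y ^ 2 / 2)) (pow2_ge_0 y). lra. }
  apply Rmult_le_reg_r with (sqrt (2 * PI)); [lra|].
  unfold Rdiv. rewrite Rmult_assoc, Rinv_l by lra. lra.
Qed.

Lemma owen_T_bounds (x : R) : 0 <= owen_T x <= gauss_weight 0 x.
Proof.
  assert (Hex := ex_RInt_owen_integrand x).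
  assert (Hpos := gauss_weight_pos x).
  split.
  - apply RInt_ge_0; [lra|exact Hex|]. intros t _.
    apply Rdiv_le_0_compat; [|nra]. apply Rmult_le_pos; [lra|apply Rlt_le, gauss_weight_pos].
  - replace (gauss_weight 0 x) with (RInt (fun _ => gauss_weight 0 x) 0 1)
      by (rewrite RInt_const; unfold scal; simpl; unfold mult; simpl; ring).
    apply RInt_le; [lra|exact Hex|apply ex_RInt_const|]. intros t _.
    assert (H1 := gauss_weight_0_le_1 (x * t)). assert (H2 := gauss_weight_pos (x * t)).
    assert (Ht : 1 <= 1 + t ^ 2) by (generalize (pow2_ge_0 t); lra).
    apply Rmult_le_reg_r with (1 + t ^ 2); [lra|].
    unfold Rdiv. rewrite Rmult_assoc, Rinv_l, Rmult_1_r by lra. nra.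
Qed.

Lemma owen_T_0 : owen_T 0 = 1 / 8.
Proof.
  assert (Hs := sqrt_2PI_ge_1). assert (HPI := PI_RGT_0).
  assert (H0 : forall t, gauss_weight 0 0 * gauss_weight 0 (0 * t) / (1 + t ^ 2)
                         = / (2 * PI) * / (1 + t²)).
  { intros t. unfold gauss_weight, Rsqr. rewrite Rmult_0_l.
    replace (- 0 ^ 2 / 2) with 0 by field. rewrite exp_0.
    rewrite <- (sqrt_sqrt (2 * PI)) at 3 by lra. field. split; [nra|lra]. }
  unfold owen_T. rewrite (RInt_ext _ _ _ _ (fun t _ => H0 t)).
  rewrite (RInt_scal (V := R_CompleteNormedModule)).
  - rewrite (is_RInt_unique (fun t => / (1 + t²)) 0 1 (atan 1 - atan 0)).
    + rewrite atan_1, atan_0. unfold scal; simpl; unfold mult; simpl. field. lra.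
    + apply (is_RInt_derive atan). { intros; apply is_derive_atan. }
      intros t _. apply (ex_derive_continuous (K := R_AbsRing) (V := R_NormedModule)).
      auto_derive. unfold Rsqr. nra.
  - apply (ex_RInt_continuous (V := R_CompleteNormedModule)). intros t _.
    apply (ex_derive_continuous (K := R_AbsRing) (V := R_NormedModule)).
    auto_derive. unfold Rsqr. nra.
Qed.

(* The derivative vanishes and [owen_T 0 = atan 1 / (2 PI)]: this replaces the usual
   polar-coordinates computation of the Gaussian integral. *)
Lemma gauss_area_owen_T (x : R) : gauss_area x ^ 2 + 2 * owen_T x = 1 / 4.
Proof.
  set (G y := gauss_area y ^ 2 + 2 * owen_T y).
  assert (HG : forall y, is_derive G y 0).
  { intros y. apply (is_derive_ext (fun y => gauss_area y * gauss_area y + 2 * owen_T y));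
      [intros; unfold G; R_eq; ring|].
    replace 0 with ((gauss_weight 0 y * gauss_area y + gauss_area y * gauss_weight 0 y)
                    + 2 * (- gauss_weight 0 y * gauss_area y)) by ring.
    apply (is_derive_plus (K := R_AbsRing) (V := R_NormedModule)).
    - apply is_derive_Rmult; apply is_derive_gauss_area.
    - apply is_derive_scal, is_derive_owen_T. }
  assert (HG0 : G 0 = 1 / 4).
  { unfold G, gauss_area. rewrite RInt_point, owen_T_0.
    change (0 ^ 2 + 2 * (1 / 8) = 1 / 4). field. }
  change (G x = 1 / 4). rewrite <- HG0.
  destruct (Rtotal_order x 0) as [Hx|[->|Hx]]; [|reflexivity|symmetry];
    apply (eq_is_derive G); [intros; apply HG|lra| intros; apply HG|lra].
Qed.

Lemma Rabs_gauss_area (x : R) : Rabs (gauss_area x) = sqrt (1 / 4 - 2 * owen_T x).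
Proof.
  rewrite <- sqrt_Rsqr_abs, <- (gauss_area_owen_T x). f_equal. unfold Rsqr. ring.
Qed.

Lemma is_lim_Rabs_gauss_area (L : Rbar) :
  is_lim Rabs L p_infty -> is_lim (fun x => Rabs (gauss_area x)) L (1 / 2).
Proof.
  intros HL. apply (is_lim_ext (fun x => sqrt (1 / 4 - 2 * owen_T x)));
    [intros; symmetry; apply Rabs_gauss_area|].
  assert (HT : is_lim owen_T L 0).
  { apply (filterlim_le_le (F := Rbar_locally' L) (fun _ => 0) _ (gauss_weight 0)).
    - apply filter_forall. apply owen_T_bounds.
    - apply is_lim_const.
    - now apply is_lim_gauss_weight. }
  replace (1 / 2) with (sqrt (1 / 4 - 2 * 0))
    by (replace (1 / 4 - 2 * 0) with ((1 / 2) * (1 / 2)) by field; apply sqrt_square; lra).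
  apply (filterlim_comp _ _ _ (fun x => 1 / 4 - 2 * owen_T x) sqrt _ (locally (1 / 4 - 2 * 0))).
  - apply (filterlim_Rminus (F := Rbar_locally' L)); [apply filterlim_const|].
    apply (filterlim_Rmult (F := Rbar_locally' L)); [apply filterlim_const|exact HT].
  - apply continuity_pt_filterlim, continuity_pt_sqrt. lra.
Qed.

Lemma filterlim_gauss_area_p_infty :
  filterlim gauss_area (Rbar_locally p_infty) (locally (1 / 2)).
Proof.
  apply (filterlim_ext_loc (fun x => Rabs (gauss_area x))).
  - exists 0. intros x Hx. apply Rabs_pos_eq, RInt_ge_0; [lra|apply ex_RInt_gauss_weight|].
    intros; apply Rlt_le, gauss_weight_pos.
  - exact (is_lim_Rabs_gauss_area _ (is_lim_Rabs _ _ p_infty (is_lim_id _))).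
Qed.

Lemma filterlim_gauss_area_m_infty :
  filterlim gauss_area (Rbar_locally m_infty) (locally (- (1 / 2))).
Proof.
  apply (filterlim_ext_loc (fun x => - Rabs (gauss_area x))).
  - exists 0. intros x Hx. rewrite Rabs_left1; [ring|].
    unfold gauss_area. rewrite <- opp_RInt_swap by apply ex_RInt_gauss_weight.
    assert (0 <= RInt (gauss_weight 0) x 0); [|unfold opp; simpl; lra].
    apply RInt_ge_0; [lra|apply ex_RInt_gauss_weight|].
    intros; apply Rlt_le, gauss_weight_pos.
  - apply (is_lim_opp _ m_infty (1 / 2)).
    exact (is_lim_Rabs_gauss_area _ (is_lim_Rabs _ _ m_infty (is_lim_id _))).
Qed.

Lemma is_RInt_gen_gauss_weight_0 :
  is_RInt_gen (gauss_weight 0) (Rbar_locally m_infty) (Rbar_locally p_infty) 1.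
Proof.
  apply (is_RInt_gen_ext (Derive gauss_area)).
  - apply filter_forall. intros ab x _. apply is_derive_unique, is_derive_gauss_area.
  - replace 1 with (1 / 2 - - (1 / 2)) by field.
    apply (is_RInt_gen_Derive (Fa := Rbar_locally m_infty) (Fb := Rbar_locally p_infty) gauss_area).
    + apply filter_forall. intros ab x _. eexists. apply is_derive_gauss_area.
    + apply filter_forall. intros ab x _.
      apply (continuous_ext (gauss_weight 0)); [|apply continuous_gauss_weight].
      intros y. symmetry. apply is_derive_unique, is_derive_gauss_area.
    + exact filterlim_gauss_area_m_infty.
    + exact filterlim_gauss_area_p_infty.
Qed.

(* Integration by parts: [x^(j+1) phi = j x^(j-1) phi - (x^j phi)'], and [x^j phi] vanishes
   at infinity. *)
Lemma is_RInt_gen_gauss_weight_S (j : nat) (l : R) :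
  is_RInt_gen (gauss_weight (pred j)) (Rbar_locally m_infty) (Rbar_locally p_infty) l ->
  is_RInt_gen (gauss_weight (S j)) (Rbar_locally m_infty) (Rbar_locally p_infty) (INR j * l).
Proof.
  intros Hl.
  apply (is_RInt_gen_ext (fun x => INR j * gauss_weight (pred j) x - Derive (gauss_weight j) x)).
  - apply filter_forall. intros ab x _.
    rewrite (is_derive_unique _ _ _ (is_derive_gauss_weight j x)). R_eq. ring.
  - replace (INR j * l) with (INR j * l - (0 - 0)) by ring.
    apply (is_RInt_gen_minus (V := R_NormedModule) (Fa := Rbar_locally m_infty)
             (Fb := Rbar_locally p_infty)
             (fun x => INR j * gauss_weight (pred j) x) (Derive (gauss_weight j))).
    + exact (is_RInt_gen_scal (V := R_NormedModule) _ (INR j) l Hl).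
    + apply (is_RInt_gen_Derive (Fa := Rbar_locally m_infty) (Fb := Rbar_locally p_infty)
               (gauss_weight j)).
      * apply filter_forall. intros ab x _. eexists. apply is_derive_gauss_weight.
      * apply filter_forall. intros ab x _.
        apply (continuous_ext (fun y => INR j * gauss_weight (pred j) y - gauss_weight (S j) y)).
        { intros y. symmetry. apply is_derive_unique, is_derive_gauss_weight. }
        apply (ex_derive_continuous (K := R_AbsRing) (V := R_NormedModule)).
        unfold gauss_weight. auto_derive. generalize sqrt_2PI_ge_1; lra.
      * apply filterlim_gauss_weight_m_infty.
      * apply filterlim_gauss_weight_p_infty.
Qed.

Lemma is_RInt_gen_gauss_weight (j : nat) :
  is_RInt_gen (gauss_weight j) (Rbar_locally m_infty) (Rbar_locally p_infty) (gauss_moment j).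
Proof.
  assert (H : forall i, is_RInt_gen (gauss_weight i) (Rbar_locally m_infty) (Rbar_locally p_infty)
                   (gauss_moment i) /\
                 is_RInt_gen (gauss_weight (S i)) (Rbar_locally m_infty) (Rbar_locally p_infty)
                   (gauss_moment (S i))).
  { induction i as [|i [IH IHS]]; split.
    - exact is_RInt_gen_gauss_weight_0.
    - replace (gauss_moment 1) with (INR 0 * 1) by (simpl; ring).
      exact (is_RInt_gen_gauss_weight_S 0 1 is_RInt_gen_gauss_weight_0).
    - exact IHS.
    - exact (is_RInt_gen_gauss_weight_S (S i) _ IH). }
  exact (proj1 (H j)).
Qed.

Lemma normal_moment_gauss (j : nat) : normal_moment j = gauss_moment j.
Proof.
  apply (is_RInt_gen_unique (FFa := Proper_StrongProper _ (Rbar_locally_filter _))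
           (FFb := Proper_StrongProper _ (Rbar_locally_filter _))).
  apply is_RInt_gen_gauss_weight.
Qed.

(** * The Khinchin family *)

Definition moment_coef (a : nat -> R) (c : R) (j k : nat) : R := a k * (INR k - c) ^ j.

Lemma PS_incr_1_derive (b : nat -> R) (k : nat) : PS_incr_1 (PS_derive b) k = INR k * b k.
Proof. destruct k as [|k]; [symmetry; apply Rmult_0_l|reflexivity]. Qed.

Lemma CV_radius_mult_INR (b : nat -> R) : CV_radius (fun k => INR k * b k) = CV_radius b.
Proof.
  rewrite <- (CV_radius_ext _ _ (PS_incr_1_derive b)).
  now rewrite CV_radius_incr_1, CV_radius_derive.
Qed.

Lemma PSeries_mult_INR (b : nat -> R) (x : R) :
  PSeries (fun k => INR k * b k) x = x * PSeries (PS_derive b) x.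
Proof.
  rewrite <- PSeries_incr_1. apply PSeries_ext. intros k. symmetry. apply PS_incr_1_derive.
Qed.

Lemma moment_coef_S (a : nat -> R) (c : R) (j : nat) (k : nat) :
  moment_coef a c (S j) k = PS_plus (fun k => INR k * moment_coef a c j k)
                                    (PS_scal (- c) (moment_coef a c j)) k.
Proof. unfold moment_coef, PS_plus, PS_scal, plus, scal; simpl; unfold mult; simpl. ring. Qed.

Lemma CV_radius_moment_coef (a : nat -> R) (c : R) (j : nat) :
  Rbar_le (CV_radius a) (CV_radius (moment_coef a c j)).
Proof.
  induction j as [|j IH].
  - rewrite (CV_radius_ext (moment_coef a c 0) a); [apply Rbar_le_refl|].
    intros k. unfold moment_coef. ring.
  - destruct (Req_dec c 0) as [->|Hc].
    + rewrite (CV_radius_ext (moment_coef a 0 (S j)) (fun k => INR k * moment_coef a 0 j k))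
        by (intros; unfold moment_coef; simpl; ring).
      now rewrite CV_radius_mult_INR.
    + rewrite (CV_radius_ext (moment_coef a c (S j)) _ (moment_coef_S a c j)).
      eapply Rbar_le_trans; [|apply CV_radius_plus].
      rewrite CV_radius_mult_INR, CV_radius_scal by (contradict Hc; lra).
      destruct (CV_radius (moment_coef a c j)); simpl in *; auto.
      destruct (CV_radius a); simpl in *; auto. rewrite Rmin_left; lra.
Qed.

Lemma PSeries_ge_term (b : nat -> R) (x : R) (k : nat) :
  (forall n, 0 <= b n) -> 0 <= x -> Rbar_lt x (CV_radius b) ->
  b k * x ^ k <= PSeries b x.
Proof.
  intros Hb Hx HR.
  assert (Hterm : forall n, 0 <= b n * x ^ n)
    by (intros; apply Rmult_le_pos; [apply Hb|now apply pow_le]).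
  assert (Hcv : is_series (fun n => b n * x ^ n) (PSeries b x)).
  { eapply is_series_ext; [|apply PSeries_correct, CV_radius_inside; now rewrite Rabs_pos_eq].
    intros n. rewrite pow_n_pow. apply Rmult_comm. }
  apply Rle_trans with (sum_n (fun n => b n * x ^ n) k).
  - rewrite sum_n_Reals. destruct k as [|k]; [simpl; lra|].
    rewrite tech5. assert (0 <= sum_f_R0 (fun n => b n * x ^ n) k) by now apply cond_pos_sum.
    lra.
  - apply (is_lim_seq_incr_compare (sum_n (fun n => b n * x ^ n))); [exact Hcv|].
    intros n. rewrite sum_Sn. generalize (Hterm (S n)). unfold plus; simpl. lra.
Qed.

Section KhinchinFamily.

Variable a : nat -> R.
Hypothesis a_nonneg : forall k, 0 <= a k.
Hypothesis a_0_pos : 0 < a 0%nat.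

Definition fulcrum_dom (s : R) : Prop := Rbar_lt (exp s) (CV_radius a).

Lemma open_fulcrum_dom : open fulcrum_dom.
Proof.
  apply (open_comp exp (fun t => Rbar_lt t (CV_radius a))); [|apply open_Rbar_lt].
  intros s _. apply (ex_derive_continuous (K := R_AbsRing) (V := R_NormedModule)).
  eexists. apply is_derive_exp.
Qed.

Lemma fulcrum_dom_moment_coef (c : R) (j : nat) (s : R) :
  fulcrum_dom s -> Rbar_lt (Rabs (exp s)) (CV_radius (moment_coef a c j)).
Proof.
  intros Hs. rewrite Rabs_pos_eq by (apply Rlt_le, exp_pos).
  eapply Rbar_lt_le_trans; [exact Hs|apply CV_radius_moment_coef].
Qed.

Lemma PSeries_exp_pos (s : R) : fulcrum_dom s -> 0 < PSeries a (exp s).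
Proof.
  intros Hs. apply Rlt_le_trans with (a 0%nat * exp s ^ 0); [simpl; lra|].
  apply PSeries_ge_term; [exact a_nonneg|apply Rlt_le, exp_pos|exact Hs].
Qed.

(* [E((X_t - c)^j)] at [t = e^s]. *)
Definition moment (c : R) (j : nat) (s : R) : R :=
  PSeries (moment_coef a c j) (exp s) / PSeries a (exp s).

Lemma moment_0 (c s : R) : fulcrum_dom s -> moment c 0 s = 1.
Proof.
  intros Hs. unfold moment. rewrite (PSeries_ext _ a) by (intros; unfold moment_coef; ring).
  field. generalize (PSeries_exp_pos s Hs). lra.
Qed.

Lemma is_derive_moment_sum (c : R) (j : nat) (s : R) : fulcrum_dom s ->
  is_derive (fun u => PSeries (moment_coef a c j) (exp u)) s
    (PSeries (moment_coef a c (S j)) (exp s) + c * PSeries (moment_coef a c j) (exp s)).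
Proof.
  intros Hs.
  replace (PSeries (moment_coef a c (S j)) (exp s) + c * PSeries (moment_coef a c j) (exp s))
    with (exp s * PSeries (PS_derive (moment_coef a c j)) (exp s)).
  - apply (is_derive_comp (PSeries (moment_coef a c j)) exp).
    + apply is_derive_PSeries, fulcrum_dom_moment_coef, Hs.
    + apply is_derive_exp.
  - rewrite <- PSeries_mult_INR, (PSeries_ext _ _ _ (moment_coef_S a c j)).
    rewrite PSeries_plus, PSeries_scal; [ring| |].
    + apply CV_radius_inside. rewrite CV_radius_mult_INR. now apply fulcrum_dom_moment_coef.
    + apply ex_pseries_scal; [apply Rmult_comm|].
      now apply CV_radius_inside, fulcrum_dom_moment_coef.
Qed.

Lemma is_derive_PSeries_exp (c s : R) : fulcrum_dom s ->
  is_derive (fun u => PSeries a (exp u)) s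
    (PSeries (moment_coef a c 1) (exp s) + c * PSeries a (exp s)).
Proof.
  intros Hs. assert (Ha : forall x, PSeries (moment_coef a c 0) x = PSeries a x)
    by (intros; apply PSeries_ext; intros; unfold moment_coef; ring).
  rewrite <- Ha. apply (is_derive_ext (fun u => PSeries (moment_coef a c 0) (exp u))).
  - intros u. apply Ha.
  - now apply is_derive_moment_sum.
Qed.

Lemma is_derive_moment (c : R) (j : nat) (s : R) : fulcrum_dom s ->
  is_derive (moment c j) s (moment c (S j) s - moment c 1 s * moment c j s).
Proof.
  intros Hs. assert (Hf := PSeries_exp_pos s Hs).
  assert (H := is_derive_div _ _ s _ _ (is_derive_moment_sum c j s Hs)
                 (is_derive_PSeries_exp c s Hs) ltac:(lra)).
  unfold moment. eapply is_derive_ext; [intros; reflexivity|].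
  replace (_ - _) with (((PSeries (moment_coef a c (S j)) (exp s)
      + c * PSeries (moment_coef a c j) (exp s)) * PSeries a (exp s)
      - PSeries (moment_coef a c j) (exp s)
        * (PSeries (moment_coef a c 1) (exp s) + c * PSeries a (exp s)))
      / PSeries a (exp s) ^ 2) by (field; lra).
  exact H.
Qed.

Lemma is_derive_fulcrum (c s : R) : fulcrum_dom s ->
  is_derive (fulcrum a) s (moment c 1 s + c).
Proof.
  intros Hs. assert (Hf := PSeries_exp_pos s Hs).
  replace (moment c 1 s + c) with
    (scal (PSeries (moment_coef a c 1) (exp s) + c * PSeries a (exp s)) (/ PSeries a (exp s)))
    by (unfold moment, scal; simpl; unfold mult; simpl; field; lra).
  apply (is_derive_comp ln (fun u => PSeries a (exp u))).
  - now apply is_derive_ln.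
  - now apply is_derive_PSeries_exp.
Qed.

Lemma moment_1_shift (c s : R) : fulcrum_dom s -> moment c 1 s = moment 0 1 s - c.
Proof.
  intros Hs. assert (E := is_derive_unique _ _ _ (is_derive_fulcrum c s Hs)).
  rewrite (is_derive_unique _ _ _ (is_derive_fulcrum 0 s Hs)) in E. lra.
Qed.

Lemma Derive_n_moment_1 (c : R) (i : nat) (s : R) : fulcrum_dom s ->
  Derive_n (moment c 1) (S i) s = Derive_n (fulcrum a) (S (S i)) s.
Proof.
  intros Hs.
  rewrite (Derive_n_ext_loc _ (fun u => Derive (fulcrum a) u - c)).
  2:{ apply (filter_imp fulcrum_dom); [|exact (open_fulcrum_dom s Hs)].
      intros u Hu. rewrite (is_derive_unique _ _ _ (is_derive_fulcrum c u Hu)). R_eq. ring. }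
  replace (S (S i)) with (i + 2)%nat by lia. replace (S i) with (i + 1)%nat by lia.
  rewrite <- !Derive_n_comp.
  apply Derive_n_ext. intros u. apply Derive_minus_const.
Qed.

(* The cumulants of [X_t - m_f(t)], [t = e^s]. *)
Definition central_cumulant (j : nat) (s : R) : R :=
  if (j <=? 1)%nat then 0 else Derive_n (fulcrum a) j s.

Lemma central_moment_is_cumulants (s : R) : fulcrum_dom s ->
  is_cumulants (fun j => moment (moment 0 1 s) j s) (fun j => central_cumulant j s).
Proof.
  intros Hs.
  destruct (is_cumulants_Derive_n fulcrum_dom open_fulcrum_dom (moment (moment 0 1 s))
    (fun u => moment_0 _ u) (fun j u => is_derive_moment _ j u) s Hs) as [H0 Hrec].
  split; [exact H0|]. intros p. rewrite Hrec. apply sum_eq. intros i Hi.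
  destruct i as [|i]; simpl pred; unfold central_cumulant; simpl Nat.leb; cbv iota.
  - simpl Derive_n. rewrite (moment_1_shift _ s Hs). ring.
  - now rewrite Derive_n_moment_1.
Qed.

Lemma khin_series_moment (c : R) (j : nat) (s : R) :
  Series (fun k => (INR k - c) ^ j * khin_prob a (exp s) k) = moment c j s.
Proof.
  unfold khin_prob, moment, PSeries, Rdiv. rewrite <- Series_scal_r.
  apply Series_ext. intros k. unfold moment_coef. ring.
Qed.

Lemma khin_mean_moment (s : R) : khin_mean a (exp s) = moment 0 1 s.
Proof.
  rewrite <- khin_series_moment. apply Series_ext. intros k. ring.
Qed.

Lemma central_moment_2 (s : R) : fulcrum_dom s ->
  moment (moment 0 1 s) 2 s = Derive_n (fulcrum a) 2 s.
Proof.
  intros Hs. destruct (central_moment_is_cumulants s Hs) as [H0 Hrec].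
  rewrite (Hrec 1%nat). simpl. rewrite C_n_0, C_n_n, H0. unfold central_cumulant. simpl. ring.
Qed.

Lemma khin_var_fulcrum (s : R) : fulcrum_dom s -> khin_var a (exp s) = Derive_n (fulcrum a) 2 s.
Proof.
  intros Hs. unfold khin_var. rewrite khin_mean_moment, khin_series_moment.
  now apply central_moment_2.
Qed.

Hypothesis a_nonconst : exists k, (1 <= k)%nat /\ a k <> 0.

Lemma fulcrum_2_pos (s : R) : fulcrum_dom s -> 0 < Derive_n (fulcrum a) 2 s.
Proof.
  intros Hs. rewrite <- central_moment_2 by exact Hs. set (m := moment 0 1 s).
  apply Rdiv_lt_0_compat; [|now apply PSeries_exp_pos].
  assert (Hterm : forall k, 0 < a k * (INR k - m) ^ 2 -> 0 < PSeries (moment_coef a m 2) (exp s)).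
  { intros k Hk. eapply Rlt_le_trans; [|apply (PSeries_ge_term _ _ k)].
    - apply Rmult_lt_0_compat; [exact Hk|apply pow_lt, exp_pos].
    - intros n. apply Rmult_le_pos; [apply a_nonneg|apply pow2_ge_0].
    - apply Rlt_le, exp_pos.
    - rewrite <- (Rabs_pos_eq (exp s)) by (apply Rlt_le, exp_pos).
      now apply fulcrum_dom_moment_coef. }
  destruct (Req_dec m 0) as [Hm|Hm].
  - destruct a_nonconst as (k & Hk & Hak). apply (Hterm k).
    assert (0 < a k) by (generalize (a_nonneg k); lra).
    assert (0 < INR k) by (apply lt_0_INR; lia).
    rewrite Hm, Rminus_0_r. apply Rmult_lt_0_compat; [lra|]. apply pow_lt. lra.
  - apply (Hterm 0%nat). simpl. apply Rmult_lt_0_compat; [exact a_0_pos|]. nra.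
Qed.

Definition norm_cumulant (j : nat) (s : R) : R :=
  central_cumulant j s / sqrt (Derive_n (fulcrum a) 2 s) ^ j.

Lemma khin_norm_is_cumulants (s : R) : fulcrum_dom s ->
  is_cumulants (fun j => khin_norm_moment a (exp s) j) (fun j => norm_cumulant j s).
Proof.
  intros Hs. assert (Hsig : 0 < sqrt (Derive_n (fulcrum a) 2 s))
    by now apply sqrt_lt_R0, fulcrum_2_pos.
  apply (is_cumulants_ext
    (fun j => moment (moment 0 1 s) j s / sqrt (Derive_n (fulcrum a) 2 s) ^ j) _
    (fun j => norm_cumulant j s)); [|reflexivity|].
  2:{ apply is_cumulants_scale; [lra|now apply central_moment_is_cumulants]. }
  intros j. symmetry.
  unfold khin_norm_moment, khin_sigma. rewrite khin_var_fulcrum, khin_mean_moment by exact Hs.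
  rewrite <- (khin_series_moment (moment 0 1 s) j s). unfold Rdiv. rewrite <- Series_scal_r.
  apply Series_ext. intros k. rewrite Rpow_mult_distr, pow_inv. ring.
Qed.

Lemma norm_cumulant_1_2 (s : R) : fulcrum_dom s ->
  norm_cumulant 1 s = 0 /\ norm_cumulant 2 s = 1.
Proof.
  intros Hs. unfold norm_cumulant, central_cumulant. simpl Nat.leb. cbv iota. split.
  - unfold Rdiv. ring.
  - rewrite <- Rsqr_pow2, Rsqr_sqrt by now apply Rlt_le, fulcrum_2_pos.
    field. apply Rgt_not_eq, fulcrum_2_pos, Hs.
Qed.

Lemma fulcrum_ratio_norm_cumulant (j : nat) (s : R) : (2 <= j)%nat -> fulcrum_dom s ->
  Derive_n (fulcrum a) j s / Rpower (Derive_n (fulcrum a) 2 s) (INR j / 2) = norm_cumulant j s.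
Proof.
  intros Hj Hs. assert (H2 := fulcrum_2_pos s Hs).
  unfold norm_cumulant, central_cumulant.
  replace (j <=? 1)%nat with false by (symmetry; apply Nat.leb_gt; lia).
  f_equal. rewrite <- Rpower_sqrt, <- Rpower_pow, Rpower_mult by (try apply exp_pos; lra).
  f_equal. field.
Qed.

Lemma filterlim_khin_norm_moments_iff {F : (R -> Prop) -> Prop} {FF : Filter F} (n : nat) :
  F fulcrum_dom ->
  (forall j, (3 <= j <= n)%nat ->
     filterlim (fun s => khin_norm_moment a (exp s) j) F (locally (gauss_moment j))) <->
  (forall j, (3 <= j <= n)%nat ->
     filterlim (fun s => Derive_n (fulcrum a) j s
                         / Rpower (Derive_n (fulcrum a) 2 s) (INR j / 2)) F (locally 0)).
Proof.
  intros Hdom.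
  assert (Hratio : forall j, (2 <= j)%nat -> F (fun s => norm_cumulant j s
    = Derive_n (fulcrum a) j s / Rpower (Derive_n (fulcrum a) 2 s) (INR j / 2))).
  { intros j Hj. generalize Hdom. apply filter_imp. intros s Hs.
    symmetry. now apply fulcrum_ratio_norm_cumulant. }
  rewrite (filterlim_gauss_moments_iff _ norm_cumulant).
  - split; intros H j Hj.
    + apply (filterlim_ext_loc (norm_cumulant j)); [apply Hratio; lia|now apply H].
    + apply (filterlim_ext_loc (fun s => Derive_n (fulcrum a) j s
               / Rpower (Derive_n (fulcrum a) 2 s) (INR j / 2))); [|now apply H].
      generalize (Hratio j ltac:(lia)). apply filter_imp. intros s Hs. now rewrite Hs.
  - generalize Hdom. apply filter_imp. intros s Hs. now apply khin_norm_is_cumulants.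
  - generalize Hdom. apply filter_imp. intros s Hs. now apply norm_cumulant_1_2.
Qed.

End KhinchinFamily.

(** * Limits at the radius of convergence *)

#[export] Instance left_to_filter (L : Rbar) : Filter (left_to L).
Proof.
  destruct L; simpl; [apply at_left_proper_filter|apply Rbar_locally_filter..].
Qed.

Lemma left_to_pos (L : Rbar) : Rbar_lt 0 L -> left_to L (fun t => 0 < t).
Proof.
  intros HL. destruct L as [r| |]; simpl in *; [|exists 0; now intros|contradiction].
  apply (locally_interval _ r 0 p_infty); [exact HL|exact I|]. intros y Hy _ _. exact Hy.
Qed.

Lemma left_to_Rbar_ln (L : Rbar) : Rbar_lt 0 L ->
  left_to (Rbar_ln L) (fun s => Rbar_lt (exp s) L).
Proof.
  intros HL. destruct L as [r| |]; simpl in *; [|exists 0; now intros|contradiction].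
  unfold at_left, within. apply filter_forall. intros s Hs. rewrite <- (exp_ln r) by exact HL.
  now apply exp_increasing.
Qed.

Lemma filterlim_at_left (f : R -> R) (x : R) :
  continuous f x -> locally x (fun y => y < x -> f y < f x) ->
  filterlim f (at_left x) (at_left (f x)).
Proof.
  intros Hc Hinc P HP. unfold filtermap, at_left, within in *.
  assert (HPf : locally x (fun y => f y < f x -> P (f y))) by exact (Hc _ HP).
  generalize (filter_and _ _ HPf Hinc). apply filter_imp.
  intros y [HPy Hy] Hyx. exact (HPy (Hy Hyx)).
Qed.

Lemma filterlim_exp_left_to (L : Rbar) : Rbar_lt 0 L ->
  filterlim exp (left_to (Rbar_ln L)) (left_to L).
Proof.
  intros HL. destruct L as [r| |]; simpl in *; [|intros P [M HM]|contradiction].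
  - rewrite <- (exp_ln r) at 2 by exact HL. apply filterlim_at_left.
    + apply (ex_derive_continuous (K := R_AbsRing) (V := R_NormedModule)).
      eexists. apply is_derive_exp.
    + apply filter_forall. intros y. apply exp_increasing.
  - exists M. intros s Hs. apply HM. generalize (exp_ineq1_le s). lra.
Qed.

Lemma filterlim_ln_left_to (L : Rbar) : Rbar_lt 0 L ->
  filterlim ln (left_to L) (left_to (Rbar_ln L)).
Proof.
  intros HL. destruct L as [r| |]; simpl in *; [|intros P [M HM]|contradiction].
  - apply filterlim_at_left.
    + apply (ex_derive_continuous (K := R_AbsRing) (V := R_NormedModule)).
      eexists. now apply is_derive_ln.
    + apply (locally_interval _ r 0 p_infty); [exact HL|exact I|].
      intros y Hy _ Hyr. now apply ln_increasing.
  - exists (exp M). intros t Ht. apply HM. rewrite <- (ln_exp M).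
    apply ln_increasing; [apply exp_pos|exact Ht].
Qed.

Lemma filterlim_left_to_exp (g : R -> R) (L : Rbar) (l : R) : Rbar_lt 0 L ->
  filterlim g (left_to L) (locally l) <->
  filterlim (fun s => g (exp s)) (left_to (Rbar_ln L)) (locally l).
Proof.
  intros HL. split; intros H.
  - exact (filterlim_comp _ _ _ exp g _ _ _ (filterlim_exp_left_to L HL) H).
  - apply (filterlim_ext_loc (fun t => g (exp (ln t)))).
    + apply (filter_imp (fun t => 0 < t)); [|now apply left_to_pos].
      intros t Ht. now rewrite exp_ln.
    + exact (filterlim_comp _ _ _ ln (fun s => g (exp s)) _ _ _ (filterlim_ln_left_to L HL) H).
Qed.

Theorem theorem2p4 (a : nat -> R)
  (Ha_nonneg : forall k, 0 <= a k) (Ha0 : 0 < a 0%nat)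
  (Hnonconst : exists k, (1 <= k)%nat /\ a k <> 0)
  (HR : Rbar_lt 0 (CV_radius a))
  (n : nat) (Hn : (3 <= n)%nat) :
  (forall j : nat, (3 <= j <= n)%nat ->
     filterlim (fun t => khin_norm_moment a t j) (left_to (CV_radius a))
       (locally (normal_moment j)))
  <->
  (forall j : nat, (3 <= j <= n)%nat ->
     filterlim (fun s => Derive_n (fulcrum a) j s
                         / Rpower (Derive_n (fulcrum a) 2 s) (INR j / 2))
       (left_to (Rbar_ln (CV_radius a))) (locally 0)).
Proof.
  rewrite <- (filterlim_khin_norm_moments_iff a Ha_nonneg Ha0 Hnonconst n)
    by now apply left_to_Rbar_ln.
  split; intros H j Hj; specialize (H j Hj); rewrite normal_moment_gauss in *;
    now apply (filterlim_left_to_exp (fun t => khin_norm_moment a t j)).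
Qed.
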